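(* Let $s\ge2$. Let $V_0$ be the set of vertices reachable from $v_0=(\mathbf 0,+1)$ in the Markov chain below, and $G_0$ the directed graph on $V_0$ with an edge $v\to v'$ whenever $P(v,v')>0$. Then $V_0$ is finite, $G_0$ is strongly connected, $G_0$ is aperiodic (the greatest common divisor of the lengths of its directed cycles is $1$), and $G_0$ is preserved by the map $\mathcal R(\mathbf u,\sigma)=(\mathbf u,-\sigma)$, i.e. $\mathcal R(V_0)=V_0$.
   Context: Vertices are pairs $(\mathbf u,\sigma)$ with $\mathbf u=(u_\omega)_{\omega\in\{0,1\}^s}\in\mathbb{Z}^{\{0,1\}^s}$ and $\sigma\in\{\pm1\}$. For $\mathbf e=(e_0,\dots,e_s)\in\{0,1\}^{s+1}$ let $\delta(\mathbf u;\mathbf e)_\omega=\lfloor (u_\omega+e_0+\sum_{i=1}^s\omega_ie_i)/2\rfloor$, and $|\mathbf u|=\sum_\omega|u_\omega|$. Transition probabilities: $P((\mathbf u,\sigma),(\mathbf u',\sigma'))=\mathbb{P}_{\mathbf e}(\delta(\mathbf u;\mathbf e)=\mathbf u')$ if $\sigma'=\sigma(-1)^{|\mathbf u|}$, and $0$ otherwise, where $\mathbf e$ is uniformly distributed on $\{0,1\}^{s+1}$. A vertex $v'$ is reachable from $v$ if there is a directed path (possibly of length $0$) from $v$ to $v'$ along edges with positive transition probability. *)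

From mathcomp Require Import all_boot all_order all_algebra.
Set Implicit Arguments. Unset Strict Implicit. Unset Printing Implicit Defensive.
Import Order.TTheory GRing.Theory Num.Theory.
Local Open Scope ring_scope.

Definition omega_t (s : nat) := {ffun 'I_s -> bool}.
Definition uvec (s : nat) := {ffun omega_t s -> int}.
(* e in {0,1}^{s+1}, e_0 = e ord0, e_i = e (lift ord0 (i-1)) *)
Definition evec (s : nat) := {ffun 'I_s.+1 -> bool}.
(* vertices (u, sigma); sigma in {+1,-1} is stored as an int *)
Definition vertex (s : nat) := (uvec s * int)%type.

Definition delta (s : nat) (u : uvec s) (e : evec s) : uvec s :=
  [ffun w : omega_t s =>
     ((u w + (e ord0 : nat)%:Z
        + (\sum_(i < s) ((w i && e (lift ord0 i)) : nat))%:Z) %/ 2)%Z].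

Definition unorm (s : nat) (u : uvec s) : nat := (\sum_(w : omega_t s) `|u w|%N)%N.

Definition P (s : nat) (v v' : vertex s) : rat :=
  if v'.2 == v.2 * (-1) ^+ unorm v.1 then
    (#|[set e : evec s | delta v.1 e == v'.1]|)%:R / (2 ^ s.+1)%:R
  else 0.

Definition edge (s : nat) (v v' : vertex s) : bool := 0 < P v v'.

Inductive reachable (s : nat) : vertex s -> vertex s -> Prop :=
| reach_refl v : reachable v v
| reach_step v w x : edge v w -> reachable w x -> reachable v x.

Definition v0 (s : nat) : vertex s := ([ffun _ => 0], 1).

Definition V0 (s : nat) (v : vertex s) : Prop := reachable (v0 s) v.

Definition dcycle (s : nat) (p : seq (vertex s)) : Prop :=
  [/\ p != [::], uniq p, cycle (@edge s) p & forall x, x \in p -> V0 x].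

Definition Rmap (s : nat) (v : vertex s) : vertex s := (v.1, - v.2).

(* Along an edge every coordinate of u is replaced by the floor of half of
   itself plus at most s + 1, so the coordinates of reachable vertices stay in [0, s] and V_0
   is finite.  The choice e = 0 halves u, so every such vertex reaches
   (0, +-1) within s steps.  The two zero vertices communicate through the
   indicator of the corner (1, ..., 1) of the cube: it is reached from 0 by
   one step with e_0 = 1 followed by intersections with the half-cubes
   {omega_i = 1}, and since its norm is 1 both its self-loop and its edge back
   to 0 flip sigma.  Hence V_0 is a single strongly connected class containing
   R(v_0), and R commutes with the transitions; the self-loop at v_0 (e = 0)
   gives aperiodicity. *)

From mathcomp Require Import all_boot all_order all_algebra zify.
Set Implicit Arguments. Unset Strict Implicit. Unset Printing Implicit Defensive.
Import Order.TTheory GRing.Theory Num.Theory.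
Local Open Scope ring_scope.

Section Transitions.
Variable s : nat.
Implicit Types (u : uvec s) (v : vertex s) (e : evec s).

Definition step v e : vertex s := (delta v.1 e, v.2 * (-1) ^+ unorm v.1).

Lemma edgeP v v' : edge v v' <-> exists e, v' = step v e.
Proof.
rewrite /edge /P; case: v' => u' sg' /=; split.
  case: eqP => [-> | _]; last by rewrite ltxx.
  rewrite pmulr_lgt0 ?invr_gt0 ?ltr0n ?expn_gt0 // card_gt0.
  by case/set0Pn=> e; rewrite inE => /eqP <-; exists e.
case=> e [-> ->]; rewrite eqxx divr_gt0 ?ltr0n ?expn_gt0 // card_gt0.
by apply/set0Pn; exists e; rewrite inE.
Qed.

Lemma edge_step v e : edge v (step v e).
Proof. by apply/edgeP; exists e. Qed.

Lemma reachable_trans v v' v'' : reachable v v' -> reachable v' v'' -> reachable v v''.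
Proof. by elim=> // a b c Eab _ IH /IH; apply: reach_step. Qed.

Lemma edge_reachable v v' : edge v v' -> reachable v v'.
Proof. by move=> E; apply: reach_step E (reach_refl _). Qed.

Lemma RmapK : involutive (@Rmap s).
Proof. by case=> u sg; rewrite /Rmap opprK. Qed.

Lemma edge_Rmap v v' : edge v v' -> edge (Rmap v) (Rmap v').
Proof. by rewrite /edge /P /Rmap /= mulNr eqr_opp. Qed.

Lemma reachable_Rmap v v' : reachable v v' -> reachable (Rmap v) (Rmap v').
Proof.
elim=> [x | a b c Eab _ IH]; first exact: reach_refl.
exact: reach_step (edge_Rmap Eab) IH.
Qed.

Definition uzero : uvec s := [ffun => 0].
Definition evec0 : evec s := [ffun => false].

Lemma unorm_uzero : unorm uzero = 0%N.
Proof. by rewrite /unorm big1 // => w _; rewrite ffunE. Qed.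

Lemma delta_evec0 u w : delta u evec0 w = (u w %/ 2)%Z.
Proof. by rewrite !ffunE big1 ?addr0 // => i _; rewrite ffunE andbF. Qed.

Lemma edge_v0 : edge (v0 s) (v0 s).
Proof.
have {2}-> : v0 s = step (v0 s) evec0; last exact: edge_step.
congr pair; last by rewrite /= unorm_uzero mulr1.
by apply/ffunP => w; rewrite delta_evec0 ffunE.
Qed.

Lemma reachable_halving k u (sg : int) : (forall w, 0 <= u w < (2 ^ k)%:Z) ->
  exists n, reachable (u, sg) (uzero, sg * (-1) ^+ n).
Proof.
elim: k u sg => [|k IH] u sg bounded_u.
  have -> : u = uzero.
    (* [u w] occurs with two elaborations that [lia] would see as distinct atoms. *)
    by apply/ffunP => w; have := bounded_u w; rewrite ffunE; move: (u w) => x; lia.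
  by exists 0%N; rewrite mulr1; apply: reach_refl.
have [|n reach_zero] := IH (delta u evec0) (sg * (-1) ^+ unorm u).
  by move=> w; rewrite delta_evec0; have := bounded_u w; rewrite expnS; lia.
exists (unorm u + n)%N; rewrite exprD mulrA.
exact: reach_step (edge_step (u, sg) evec0) reach_zero.
Qed.

Definition sign_unit (x : int) : Prop := x = 1 \/ x = -1.

Lemma sign_unitMsign x n : sign_unit x -> sign_unit (x * (-1) ^+ n).
Proof.
rewrite /sign_unit -signr_odd; case: odd => /=; rewrite ?mulr1 ?mulrN1 //.
by case=> ->; rewrite ?opprK; [right | left].
Qed.

Definition bounded_vertex v : Prop :=
  (forall w, 0 <= v.1 w <= s%:Z) /\ sign_unit v.2.

Lemma bounded_vertex_step v e : bounded_vertex v -> bounded_vertex (step v e).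
Proof.
case=> bounded_u sign_v; split=> [w|]; last exact: sign_unitMsign.
have e0_le1 : ((e ord0 : nat) <= 1)%N := leq_b1 _.
have sum_le : (\sum_(i < s) (w i && e (lift ord0 i) : nat) <= s)%N.
  by rewrite -[X in (_ <= X)%N]card_ord -sum1_card leq_sum // => i _; apply: leq_b1.
rewrite ffunE; have := bounded_u w.
move: (v.1 w) (nat_of_bool (e ord0)) e0_le1 => x b b_le1.
move: (\sum_(i < s) _)%N sum_le => S S_le; lia.
Qed.

Lemma bounded_vertex_reachable v v' :
  reachable v v' -> bounded_vertex v -> bounded_vertex v'.
Proof. by elim=> // a b c /edgeP[e ->] _ IH /(bounded_vertex_step e). Qed.

Lemma bounded_vertex_v0 : bounded_vertex (v0 s).
Proof. by split=> [w|]; [rewrite ffunE | left]. Qed.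

Lemma bounded_vertex_finite : exists l : seq (vertex s), forall v, bounded_vertex v -> v \in l.
Proof.
exists [seq ([ffun w => (fb.1 w : nat)%:Z], (-1) ^+ fb.2)
         | fb : ({ffun omega_t s -> 'I_s.+1} * bool)%type].
case=> u sg [/= bounded_u sign_sg].
apply/mapP; exists ([ffun w => inord `|u w|], sg == -1); first by rewrite mem_enum.
congr pair; last by case: sign_sg => ->.
apply/ffunP => w; rewrite !ffunE inordK; have := bounded_u w; move: (u w) => x; lia.
Qed.

End Transitions.

Section Corner.
Variable s : nat.
Hypothesis s_gt0 : (0 < s)%N.
Implicit Types (u : uvec s) (p : pred (omega_t s)).

Definition indicator p : uvec s := [ffun w => (p w : nat)%:Z].

Lemma eq_indicator p q : p =1 q -> indicator p = indicator q.
Proof. by move=> eq_pq; apply/ffunP => w; rewrite !ffunE eq_pq. Qed.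

Lemma unorm_indicator p : unorm (indicator p) = #|p|.
Proof.
rewrite /unorm -sum1_card [RHS]big_mkcond.
by apply: eq_bigr => w _; rewrite ffunE unfold_in; case: (p w).
Qed.

Definition evec_unit (b : bool) (i : 'I_s) : evec s :=
  [ffun k => if unlift ord0 k is Some j then j == i else b].

Lemma delta_unit u b i w : delta u (evec_unit b i) w = ((u w + b + w i) %/ 2)%Z.
Proof.
rewrite !ffunE unlift_none; congr ((_ + _ + Posz _) %/ _)%Z.
rewrite (bigD1 i) //= ffunE liftK eqxx andbT big1 ?addn0 // => k /negbTE k_neq_i.
by rewrite ffunE liftK k_neq_i andbF.
Qed.

Lemma delta_indicator_and p i :
  delta (indicator p) (evec_unit false i) = indicator [pred w | p w && w i].
Proof. by apply/ffunP => w; rewrite delta_unit !ffunE /=; case: (p w); case: (w i). Qed.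

Lemma delta_uzero_unit i : delta (uzero s) (evec_unit true i) = indicator (fun w => w i).
Proof. by apply/ffunP => w; rewrite delta_unit !ffunE; case: (w i). Qed.

Lemma delta_indicator_evec0 p : delta (indicator p) (evec0 s) = uzero s.
Proof. by apply/ffunP => w; rewrite delta_evec0 !ffunE; case: (p w). Qed.

Lemma reachable_indicator_all p (r : seq 'I_s) (sg : int) : exists n,
  reachable (indicator p, sg) (indicator [pred w | p w && all w r], sg * (-1) ^+ n).
Proof.
elim: r p sg => [|i r IH] p sg.
  have -> : indicator [pred w | p w && all w [::]] = indicator p.
    by apply: eq_indicator => w /=; rewrite andbT.
  by exists 0%N; rewrite mulr1; apply: reach_refl.
have [n reach_all] := IH [pred w | p w && w i] (sg * (-1) ^+ unorm (indicator p)).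
exists (unorm (indicator p) + n)%N; rewrite exprD mulrA.
have := edge_step (indicator p, sg) (evec_unit false i).
rewrite /step /= delta_indicator_and => /reach_step; apply.
suff -> : indicator [pred w | p w && all w (i :: r)] =
          indicator [pred w | (p w && w i) && all w r] by [].
by apply: eq_indicator => w /=; rewrite andbA.
Qed.

Definition corner : uvec s := indicator (pred1 [ffun => true]).

Lemma unorm_corner : unorm corner = 1%N.
Proof. by rewrite unorm_indicator card1. Qed.

Lemma reachable_uzero_corner (sg : int) :
  exists n, reachable (uzero s, sg) (corner, sg * (-1) ^+ n).
Proof.
pose i0 := Ordinal s_gt0.
have [n reach_corner] := reachable_indicator_all (fun w => w i0) (enum 'I_s) sg.
exists n; apply: reach_step (edge_step (uzero s, sg) (evec_unit true i0)) _.
rewrite /step /= delta_uzero_unit unorm_uzero mulr1.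
suff <- : indicator [pred w : omega_t s | w i0 && all w (enum 'I_s)] = corner by [].
apply: eq_indicator => w /=; apply/andP/eqP => [[_ /allP all_w] | ->].
  by apply/ffunP => i; rewrite ffunE all_w ?mem_enum.
by rewrite ffunE; split=> //; apply/allP => i _; rewrite ffunE.
Qed.

Lemma edge_corner_loop (sg : int) : edge (corner, sg) (corner, - sg).
Proof.
have := edge_step (corner, sg) (evec_unit false (Ordinal s_gt0)).
rewrite /step /= unorm_corner mulrN1 delta_indicator_and.
suff -> : indicator [pred w | pred1 [ffun => true] w && w (Ordinal s_gt0)] = corner by [].
by apply: eq_indicator => w /=; case: eqP => // ->; rewrite ffunE.
Qed.

Lemma edge_corner_uzero (sg : int) : edge (corner, sg) (uzero s, - sg).
Proof.
have := edge_step (corner, sg) (evec0 s).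
by rewrite /step /= unorm_corner mulrN1 delta_indicator_evec0.
Qed.

Lemma reachable_uzero_opp (sg : int) : reachable (uzero s, sg) (uzero s, - sg).
Proof.
have [n reach_corner] := reachable_uzero_corner sg.
apply: reachable_trans reach_corner _; rewrite -signr_odd; case: odd => /=.
  rewrite mulrN1; apply: reach_step (edge_corner_loop _) _.
  by rewrite opprK; apply: edge_reachable (edge_corner_uzero _).
by rewrite mulr1; apply: edge_reachable (edge_corner_uzero _).
Qed.

Lemma reachable_uzero_sign (sg tau : int) :
  sign_unit sg -> sign_unit tau -> reachable (uzero s, sg) (uzero s, tau).
Proof.
case=> -> [] ->; try exact: reach_refl; first exact: reachable_uzero_opp.
by have := reachable_uzero_opp (-1); rewrite opprK.
Qed.

Lemma bounded_vertex_reachable_v0 v : bounded_vertex v -> reachable v (v0 s).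
Proof.
case: v => u sg [/= bounded_u sign_sg].
have [|n reach_uzero] := @reachable_halving s s u sg.
  move=> w; have := ltn_expl s (ltnSn 1); have := bounded_u w; move: (u w) => x; lia.
apply: reachable_trans reach_uzero (reachable_uzero_sign (sign_unitMsign n sign_sg) _).
by left.
Qed.

End Corner.

Theorem proposition2p3 (s : nat) (hs : (2 <= s)%N) :
  (* V_0 is finite *)
  (exists l : seq (vertex s), forall v, V0 v -> v \in l) /\
  (* G_0 is strongly connected *)
  (forall v w : vertex s, V0 v -> V0 w -> reachable v w) /\
  (* G_0 is aperiodic: the only common divisor of all directed cycle lengths is 1 *)
  (forall d : nat, (forall p : seq (vertex s), dcycle p -> (d %| size p)%N) -> d = 1%N) /\
  (* R(V_0) = V_0 *)
  (forall v : vertex s, V0 v -> V0 (Rmap v)) /\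
  (forall w : vertex s, V0 w -> exists v, V0 v /\ Rmap v = w).
Proof.
have s_gt0 : (0 < s)%N by apply: ltnW.
have V0_bounded (v : vertex s) : V0 v -> bounded_vertex v.
  by move/bounded_vertex_reachable; apply; apply: bounded_vertex_v0.
have V0_Rmap (v : vertex s) : V0 v -> V0 (Rmap v).
  by move=> V0v; apply: reachable_trans (reachable_uzero_opp s_gt0 1) (reachable_Rmap V0v).
split.
  by have [l in_l] := bounded_vertex_finite s; exists l => v /V0_bounded /in_l.
split.
  move=> v w /V0_bounded /(bounded_vertex_reachable_v0 s_gt0) reach_v0 V0w.
  exact: reachable_trans reach_v0 V0w.
split.
  move=> d dvd_cycles; apply/eqP; rewrite -dvdn1; apply: (dvd_cycles [:: v0 s]).
  split=> //; first by rewrite /= edge_v0.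
  by move=> x; rewrite inE => /eqP ->; apply: reach_refl.
split=> // w V0w; exists (Rmap w); split; [exact: V0_Rmap | exact: RmapK].
Qed.
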